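(* Let $G=(V,E)$ be a connected simple graph with $n$ vertices. Then (a) $$\sum_{uv\in E}\frac{1}{|N(u)\cap N(v)|+2}\ \ge\ \frac{n-1}{2},$$ where the sum runs over the edges of $G$ (each edge counted once); (b) equality holds in (a) if and only if every biconnected component of $G$ is a clique.
   Context: For a vertex $u$, $N(u)=\{v\in V: uv\in E\}$ is its open neighbourhood (so $u\notin N(u)$), and $N(u)\cap N(v)$ is the set of common neighbours of $u$ and $v$. A biconnected component (block) of $G$ is a maximal connected subgraph of $G$ that has no cut vertex of its own; in particular a bridge together with its two endpoints forms a biconnected component (isomorphic to $K_2$). *)

(* Finite simple graph = symmetric irreflexive rel on a finType. *)
From HB Require Import structures.
From mathcomp Require Import all_boot all_order all_algebra.
Set Implicit Arguments. Unset Strict Implicit. Unset Printing Implicit Defensive.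

Section Graph.
Variables (T : finType) (e : rel T).

Definition connected_graph : Prop := forall x y : T, connect e x y.

Definition edges : {set {set T}} :=
  [set f : {set T} | [exists u, exists v, e u v && (f == [set u; v])]].

Definition common_nbhd (f : {set T}) : {set T} :=
  [set w | [forall x in f, e x w]].

Definition induced_rel (A : {set T}) : rel T :=
  [rel x y | [&& e x y, x \in A & y \in A]].

(* the induced subgraph G[A] is connected (vacuous for A empty) *)
Definition conn_set (A : {set T}) : bool :=
  [forall x in A, forall y in A, connect (induced_rel A) x y].

Definition biconnected_set (A : {set T}) : bool :=
  [&& A != set0, conn_set A & [forall v in A, conn_set (A :\ v)]].

Definition block (A : {set T}) : bool := maxset biconnected_set A.

Definition clique (A : {set T}) : bool :=
  [forall x in A, forall y in A, (x != y) ==> e x y].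

End Graph.

From HB Require Import structures.
From mathcomp Require Import all_boot all_order all_algebra all_fingroup.
From mathcomp Require Import zify ring.
Set Implicit Arguments. Unset Strict Implicit. Unset Printing Implicit Defensive.

(* Order the vertices by a permutation and call an edge [uv] early when [u] or [v]
   precedes every common neighbour of [u] and [v]. Exactly 2/(|N(u) ∩ N(v)| + 2) of
   the orderings make [uv] early, so the sum is half the average number of early edges.
   Insert the vertices in order: a new vertex [z] forms an early edge with the first of
   its neighbours in each component it touches, hence the number of components plus the
   number of early edges never drops below the number of inserted vertices, and every
   ordering has at least n - 1 early edges. Two such neighbours in one component are
   joined in G - z; if every block is a clique they are adjacent and only the earlier
   one forms an early edge, so every ordering has exactly n - 1. Otherwise a vertex [v]
   has nonadjacent neighbours [u1], [u2] joined in G - v, and the ordering starting with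
   [u1], [u2] and ending with [v] has n early edges. *)

Lemma connect_sub_preorder (T : finType) (f R : rel T) :
  reflexive R -> transitive R -> subrel f R -> subrel (connect f) R.
Proof.
move=> Rr Rt fR x y /connectP [p]; elim: p x => [|a p IH] x /=.
  by move=> _ ->.
by case/andP=> fxa pa ly; apply: Rt (fR _ _ fxa) (IH _ pa ly).
Qed.

Section InducedConnect.
Variables (T : finType) (e : rel T).
Hypotheses (e_sym : symmetric e) (e_irr : irreflexive e).
Local Notation conn A := (connect (induced_rel e A)).
Implicit Types (A B S : {set T}).

Lemma induced_rel_sym A : symmetric (induced_rel e A).
Proof.
by move=> x y; rewrite /induced_rel /= e_sym; case: (x \in A); case: (y \in A); rewrite ?andbF.
Qed.

Lemma connect_induced_sym A x y : conn A x y = conn A y x.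
Proof. exact: (sym_connect_sym (induced_rel_sym A)). Qed.

Lemma connect_induced_mem A x y : conn A x y -> x != y -> (x \in A) && (y \in A).
Proof.
move=> c nxy; suff : (x == y) || (x \in A) && (y \in A) by rewrite (negbTE nxy).
apply: (connect_sub_preorder (R := fun x y => (x == y) || (x \in A) && (y \in A))) c.
- by move=> z; rewrite eqxx.
- move=> b a c /orP [/eqP -> // | /andP [Ha Hb]] /orP [/eqP <- | /andP [_ Hc]].
    by rewrite Ha Hb orbT.
  by rewrite Ha Hc orbT.
- by move=> a b /= /and3P [_ -> ->]; rewrite orbT.
Qed.

Lemma connect_induced_sub A B x y : A \subset B -> conn A x y -> conn B x y.
Proof.
move=> sAB; apply: connect_sub => a b /= /and3P [eab Ha Hb].
by apply: connect1; rewrite /induced_rel /= eab (subsetP sAB _ Ha) (subsetP sAB _ Hb).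
Qed.

Lemma connect_induced_edge A x y : e x y -> x \in A -> y \in A -> conn A x y.
Proof. by move=> exy Hx Hy; apply: connect1; rewrite /induced_rel /= exy Hx Hy. Qed.

Lemma connect_induced_setT : connected_graph e -> forall x y, conn setT x y.
Proof.
move=> Gc x y; rewrite (eq_connect (e' := e)) //.
by move=> a b; rewrite /induced_rel /= !inE !andbT.
Qed.

Lemma in_common_nbhd2 u v w : (w \in common_nbhd e [set u; v]) = e u w && e v w.
Proof.
rewrite inE; apply/forall_inP/andP => [H | [H1 H2] x].
  by split; apply: H; rewrite !inE eqxx ?orbT.
by rewrite !inE => /orP [] /eqP ->.
Qed.

Lemma edgesP f : reflect (exists u v, e u v /\ f = [set u; v]) (f \in edges e).
Proof.
rewrite inE; apply: (iffP existsP) => [[u /existsP [v /andP [euv /eqP ->]]] | [u [v [euv ->]]]].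
  by exists u, v.
by exists u; apply/existsP; exists v; rewrite euv eqxx.
Qed.

(* Equivalent to every block being a clique, see [linked_nbrs_adjacentP]. *)
Definition linked_nbrs_adjacent : Prop :=
  forall v u1 u2, e v u1 -> e v u2 -> u1 != u2 -> conn [set~ v] u1 u2 -> e u1 u2.

Definition touches S z x := [exists u, [&& u \in S, e u z & conn S x u]].
Definition linked_to S z x := (x == z) || touches S z x.

Lemma linked_to_connect S z x y : z \notin S -> conn S x y -> linked_to S z y -> linked_to S z x.
Proof.
move=> zS c /orP [/eqP Hy | /existsP [u /and3P [uS euz cyu]]].
  subst y; case: (eqVneq x z) => [->|nx]; first by rewrite /linked_to eqxx.
  by case/andP: (connect_induced_mem c nx) => _; rewrite (negbTE zS).
apply/orP; right; apply/existsP; exists u; rewrite uS euz; exact: connect_trans c cyu.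
Qed.

Lemma connect_induced_setU1 S z x y : z \notin S ->
  conn (z |: S) x y = conn S x y || (linked_to S z x && linked_to S z y).
Proof.
move=> zS; apply/idP/idP.
- apply: (connect_sub_preorder
    (R := fun x y => conn S x y || (linked_to S z x && linked_to S z y))).
  + by move=> a; rewrite connect0.
  + move=> b a c /orP [Hab | /andP [Ta Tb]] /orP [Hbc | /andP [Tb' Tc]].
    * by rewrite (connect_trans Hab Hbc).
    * by rewrite (linked_to_connect zS Hab Tb') Tc orbT.
    * by rewrite connect_induced_sym in Hbc; rewrite Ta (linked_to_connect zS Hbc Tb) orbT.
    * by rewrite Ta Tc orbT.
  + move=> a b; rewrite /induced_rel /= !inE => /and3P [eab Ha Hb].
    case/orP: Ha => [/eqP Ha | Ha]; case/orP: Hb => [/eqP Hb | Hb].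
    * by subst; rewrite e_irr in eab.
    * subst a; apply/orP; right; rewrite /linked_to eqxx /=; apply/orP; right.
      by apply/existsP; exists b; rewrite Hb (e_sym b z) eab connect0.
    * subst b; apply/orP; right; rewrite /linked_to eqxx /= andbT; apply/orP; right.
      by apply/existsP; exists a; rewrite Ha eab connect0.
    * by apply/orP; left; exact: connect_induced_edge.
- case/orP => [c | /andP [Tx Ty]]; first by apply: connect_induced_sub c; apply: subsetUr.
  have Hz w : linked_to S z w -> conn (z |: S) w z.
    case/orP => [/eqP -> | /existsP [u /and3P [uS euz cwu]]]; first exact: connect0.
    apply: connect_trans (connect_induced_sub (subsetUr _ _) cwu) _.
    by apply: connect_induced_edge; rewrite // !inE ?eqxx ?uS ?orbT.
  by apply: connect_trans (Hz _ Tx) _; rewrite connect_induced_sym; apply: Hz.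
Qed.

Lemma connect_setU1_unlinked S z y w : z \notin S -> ~~ linked_to S z y ->
  conn (z |: S) y w = conn S y w.
Proof. by move=> zS H; rewrite connect_induced_setU1 // (negbTE H) andFb orbF. Qed.

End InducedConnect.

Section Ordering.
Variables (T : finType) (e : rel T).
Hypotheses (e_sym : symmetric e) (e_irr : irreflexive e).
Variable r : T -> nat.
Hypothesis r_inj : injective r.
Local Notation conn A := (connect (induced_rel e A)).
Implicit Types (S : {set T}).

Definition early_edge f := [forall w in common_nbhd e f, [exists x in f, r x < r w]].
Definition prefix i := [set x | r x < i].
Definition early_edges_in S := [set f in edges e | (f \subset S) && early_edge f].
Definition n_early_in S := #|early_edges_in S|.
Definition n_early := #|[set f in edges e | early_edge f]|.

Definition comp_min S x := [arg min_(y < x | conn S x y) r y].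
Definition comp_mins S := [set x in S | [forall y, conn S x y ==> (r x <= r y)]].
Definition early_nbrs S z := [set u in S | e u z && early_edge [set u; z]].

Lemma comp_min_connect S x : conn S x (comp_min S x).
Proof. by rewrite /comp_min; case: arg_minnP => //; exact: connect0. Qed.

Lemma comp_min_le S x y : conn S x y -> r (comp_min S x) <= r y.
Proof. by rewrite /comp_min; case: arg_minnP => [|l _ H]; [exact: connect0|apply: H]. Qed.

Lemma comp_min_in S x : x \in S -> comp_min S x \in comp_mins S.
Proof.
move=> Hx; rewrite inE; apply/andP; split.
  case: (eqVneq x (comp_min S x)) => [<- // | ne].
  by case/andP: (connect_induced_mem (comp_min_connect S x) ne).
apply/forallP => y; apply/implyP => c; apply: comp_min_le.
exact: connect_trans (comp_min_connect S x) c.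
Qed.

Lemma comp_min_eq S x y : y \in comp_mins S -> conn S x y -> comp_min S x = y.
Proof.
rewrite inE => /andP [_ /forallP H] c; apply: r_inj; apply/eqP; rewrite eqn_leq.
rewrite comp_min_le //=; apply: (implyP (H (comp_min S x))).
by rewrite (connect_induced_sym e_sym) in c; apply: connect_trans c (comp_min_connect S x).
Qed.

Lemma linked_comp_minU1 S z : z \notin S -> linked_to e S z (comp_min (z |: S) z).
Proof.
move=> zS; have := comp_min_connect (z |: S) z.
rewrite (connect_induced_setU1 e_sym e_irr) // => /orP [c | /andP [_ //]].
case: (eqVneq z (comp_min (z |: S) z)) => [<-|ne]; first by rewrite /linked_to eqxx.
by case/andP: (connect_induced_mem c ne); rewrite (negbTE zS).
Qed.

Lemma comp_minsU1 S z : z \notin S ->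
  comp_mins (z |: S) = comp_min (z |: S) z |: (comp_mins S :\: [set x | touches e S z x]).
Proof.
move=> zS; apply/setP => y; apply/idP/idP.
- move=> Hy; case Ty: (linked_to e S z y).
    have c : conn (z |: S) z y.
      by rewrite (connect_induced_setU1 e_sym e_irr) // Ty /linked_to eqxx orbT.
    by rewrite (comp_min_eq Hy c) setU11.
  apply/setU1P; right; apply/setDP; split; last first.
    by rewrite inE; apply: contraFN Ty => H; rewrite /linked_to H orbT.
  move: Hy; rewrite inE => /andP [yS' /forallP H].
  rewrite inE; apply/andP; split.
    by move: yS'; rewrite !inE => /orP [/eqP yz|//]; move: Ty; rewrite /linked_to yz eqxx.
  apply/forallP => w; rewrite -(connect_setU1_unlinked e_sym e_irr w zS (negbT Ty)).
  exact: H w.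
- case/setU1P => [->| /setDP [Hy nt]]; first by apply: comp_min_in; rewrite setU11.
  have yz : y != z by apply: contraTneq Hy => ->; rewrite inE (negbTE zS).
  have nT : ~~ linked_to e S z y by rewrite /linked_to negb_or yz; move: nt; rewrite inE.
  move: Hy; rewrite inE => /andP [yS /forallP H].
  rewrite !inE yS orbT /=; apply/forallP => w.
  by rewrite (connect_setU1_unlinked e_sym e_irr) //; exact: H w.
Qed.

Lemma card_comp_minsU1 S z : z \notin S ->
  #|comp_mins (z |: S)| + #|comp_mins S :&: [set x | touches e S z x]| = #|comp_mins S| + 1.
Proof.
move=> zS; rewrite comp_minsU1 // cardsU1.
have -> : comp_min (z |: S) z \notin comp_mins S :\: [set x | touches e S z x].
  apply/negP => /setDP [H1]; rewrite inE => H2.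
  move: (linked_comp_minU1 zS); rewrite /linked_to (negbTE H2) orbF => /eqP lz.
  by move: H1; rewrite inE lz (negbTE zS).
by have := cardsID [set x | touches e S z x] (comp_mins S); lia.
Qed.

Lemma in_prefix i x : (x \in prefix i) = (r x < i).
Proof. by rewrite inE. Qed.

Lemma prefixS i : prefix i.+1 = prefix i \/ exists2 z, r z = i & prefix i.+1 = z |: prefix i.
Proof.
case: (pickP (fun z => r z == i)) => [z /eqP rz | none]; [right; exists z => // | left];
  apply/setP => x; rewrite !inE ltnS leq_eqVlt; last by rewrite none.
by rewrite -rz (inj_eq r_inj).
Qed.

Section AddVertex.
Variable z : T.
Local Notation S := (prefix (r z)).

Lemma notin_prefix : z \notin S.
Proof. by rewrite in_prefix ltnn. Qed.

Lemma touched_comp_mins :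
  comp_mins S :&: [set x | touches e S z x] = comp_min S @: early_nbrs S z.
Proof.
apply/setP => x; apply/idP/idP.
- rewrite inE => /andP [xL]; rewrite inE => /existsP [u0 /and3P [u0S eu0 cxu0]].
  pose P u := [&& u \in S, e u z & conn S x u].
  have P0 : P u0 by rewrite /P u0S eu0 cxu0.
  case: (arg_minnP r P0) => u /and3P [uS euz cxu] umin.
  (* the earliest neighbour of z in the component of x precedes its common neighbours with z *)
  have uM : u \in early_nbrs S z.
    rewrite inE uS euz /=; apply/forall_inP => w; rewrite in_common_nbhd2 => /andP [euw ezw].
    apply/existsP; exists u; rewrite !inE eqxx /= ltnNge; apply/negP => rwu.
    have wu : w != u by apply: contraTneq euw => ->; rewrite e_irr.
    have rwu' : r w < r u by rewrite ltn_neqAle rwu (inj_eq r_inj) wu.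
    have wS : w \in S by rewrite in_prefix (ltn_trans rwu') // -in_prefix.
    have := umin w; rewrite /P wS (e_sym w z) ezw /=.
    rewrite (connect_trans cxu (connect_induced_edge euw uS wS)) => /(_ isT).
    by rewrite leqNgt rwu'.
  apply/imsetP; exists u => //; symmetry.
  by apply: comp_min_eq; rewrite // (connect_induced_sym e_sym).
- case/imsetP => u; rewrite inE => /andP [uS /andP [euz _]] ->.
  rewrite inE comp_min_in //= inE; apply/existsP; exists u.
  by rewrite uS euz (connect_induced_sym e_sym) comp_min_connect.
Qed.

Lemma early_nbrs_nonadjacent u1 u2 :
  u1 \in early_nbrs S z -> u2 \in early_nbrs S z -> r u1 < r u2 -> ~~ e u1 u2.
Proof.
rewrite !inE => /andP [u1S /andP [e1 _]] /andP [u2S /andP [e2 g2]] lt; apply/negP => e12.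
move/forall_inP: g2 => /(_ u1); rewrite in_common_nbhd2 (e_sym u2 u1) e12 (e_sym z u1) e1.
move=> /(_ isT) /existsP [y]; rewrite !inE => /andP [/orP [] /eqP -> ].
  by rewrite ltnNge ltnW.
by rewrite ltnNge ltnW // -in_prefix.
Qed.

Lemma card_touched_le : #|comp_mins S :&: [set x | touches e S z x]| <= #|early_nbrs S z|.
Proof. by rewrite touched_comp_mins leq_imset_card. Qed.

Lemma card_touched_eq : linked_nbrs_adjacent e ->
  #|comp_mins S :&: [set x | touches e S z x]| = #|early_nbrs S z|.
Proof.
move=> blk; rewrite touched_comp_mins; apply/eqP/imset_injP => u1 u2 H1 H2 El.
case: (eqVneq u1 u2) => // ne; exfalso.
have c : conn S u1 u2.
  apply: connect_trans (comp_min_connect S u1) _.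
  by rewrite El (connect_induced_sym e_sym) comp_min_connect.
move: (H1) (H2); rewrite !inE => /andP [u1S /andP [e1 _]] /andP [u2S /andP [e2 _]].
have e12 : e u1 u2.
  apply: (blk z); rewrite ?(e_sym z) //; apply: connect_induced_sub c.
  by apply/subsetP => w wS; rewrite !inE; apply: contraTneq wS => ->; exact: notin_prefix.
case: (ltngtP (r u1) (r u2)) => [lt|lt|/r_inj eq]; last by rewrite eq eqxx in ne.
- by move/negP: (early_nbrs_nonadjacent H1 H2 lt).
- by rewrite e_sym in e12; move/negP: (early_nbrs_nonadjacent H2 H1 lt).
Qed.

Lemma card_touched_lt u1 u2 : u1 \in early_nbrs S z -> u2 \in early_nbrs S z ->
  u1 != u2 -> conn S u1 u2 ->
  #|comp_mins S :&: [set x | touches e S z x]| < #|early_nbrs S z|.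
Proof.
move=> H1 H2 ne c; rewrite touched_comp_mins ltn_neqAle leq_imset_card andbT.
apply/negP => /imset_injP inj.
have u2S : u2 \in S by move: H2; rewrite inE => /andP [].
have El : comp_min S u1 = comp_min S u2.
  by apply: comp_min_eq; [exact: comp_min_in | exact: connect_trans c (comp_min_connect S u2)].
by move: (inj u1 u2 H1 H2 El) => eq; rewrite eq eqxx in ne.
Qed.

Lemma early_edges_inU1 :
  early_edges_in (z |: S) = early_edges_in S :|: [set [set u; z] | u in early_nbrs S z].
Proof.
apply/setP => f; apply/idP/idP.
- rewrite inE => /andP [/edgesP [u [v [euv ->]]] /andP [sub g]].
  case: (boolP (z \in [set u; v])) => zin.
  + apply/setUP; right; apply/imsetP.
    have mem x : x \in [set u; v] -> x != z -> x \in S.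
      by move=> xin xz; move: (subsetP sub x xin); rewrite !inE (negbTE xz).
    have uv : u != v by apply: contraTneq euv => ->; rewrite e_irr.
    case/set2P: zin => [zu | zv].
    * rewrite -zu in uv euv g mem *; exists v; last by rewrite setUC.
      by rewrite inE mem ?set22 1?eq_sym //= e_sym euv /= setUC.
    * rewrite -zv in uv euv g mem *; exists u => //.
      by rewrite inE mem ?set21 //= euv g.
  + apply/setUP; left; rewrite inE g andbT; apply/andP; split.
      by apply/edgesP; exists u, v.
    apply/subsetP => x xf; move: (subsetP sub x xf); rewrite !inE => /orP [/eqP xz|//].
    by subst; rewrite xf in zin.
- case/setUP => [| /imsetP [u uM ->]].
  + rewrite !inE => /andP [fE /andP [sub g]]; rewrite fE g andbT /=.
    exact: subset_trans sub (subsetUr _ _).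
  + have /setIdP [uS /andP [euz g]] := uM.
    apply/setIdP; split; first by apply/edgesP; exists u, z.
    rewrite g andbT; apply/subsetP => x; rewrite !inE -in_prefix.
    by case/orP => /eqP ->; rewrite ?eqxx ?uS ?orbT.
Qed.

Lemma n_early_inU1 : n_early_in (z |: S) = n_early_in S + #|early_nbrs S z|.
Proof.
have zS := notin_prefix.
rewrite /n_early_in early_edges_inU1 cardsU.
have -> : early_edges_in S :&: [set [set u; z] | u in early_nbrs S z] = set0.
  apply/setP => f; rewrite !inE; apply/negP => /andP [/andP [_ /andP [sub _]] /imsetP [u _ Hf]].
  by subst f; move: (subsetP sub z); rewrite !inE eqxx orbT ltnn => /(_ isT).
rewrite cards0 subn0 card_in_imset // => u1 u2 H1 _ E12.
have : u1 \in [set u2; z] by rewrite -E12 set21.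
rewrite !inE => /orP [/eqP //|/eqP u1z].
by move: H1; rewrite inE u1z (negbTE zS).
Qed.

End AddVertex.

Lemma prefix0 : prefix 0 = set0.
Proof. by apply/setP => x; rewrite !inE ltn0. Qed.

Lemma n_early_in0 : n_early_in set0 = 0.
Proof.
apply: eq_card0 => f; rewrite in_set subset0.
apply/andP => -[/edgesP [u [v [_ ->]]] /andP [/eqP /setP /(_ u) E _]].
by move: E; rewrite !inE eqxx.
Qed.

Lemma card_prefix_le i : #|prefix i| <= n_early_in (prefix i) + #|comp_mins (prefix i)|.
Proof.
elim: i => [|i IH]; first by rewrite prefix0 cards0.
case: (prefixS i) IH => [-> // | [z <- ->]] IH.
have := card_comp_minsU1 (notin_prefix z); have := n_early_inU1 z.
have := card_touched_le z; rewrite cardsU1 notin_prefix add1n; lia.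
Qed.

Lemma card_prefix_eq i : linked_nbrs_adjacent e ->
  #|prefix i| = n_early_in (prefix i) + #|comp_mins (prefix i)|.
Proof.
move=> blk; elim: i => [|i IH].
  rewrite prefix0 cards0 n_early_in0; apply/esym/eqP; rewrite cards_eq0.
  by apply/eqP/setP => x; rewrite !inE.
case: (prefixS i) IH => [-> // | [z <- ->]] IH.
have := card_comp_minsU1 (notin_prefix z); have := n_early_inU1 z.
have := card_touched_eq z blk; rewrite cardsU1 notin_prefix add1n; lia.
Qed.

Lemma prefix_max : prefix (\max_x r x).+1 = setT.
Proof. by apply/setP => x; rewrite !inE ltnS (leq_bigmax x). Qed.

Lemma n_early_in_setT : n_early_in setT = n_early.
Proof. by apply: eq_card => f; rewrite !inE subsetT. Qed.

Lemma card_comp_mins_setT : connected_graph e -> 0 < #|T| -> #|comp_mins setT| = 1.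
Proof.
move=> Gc /card_gt0P [t _].
suff -> : comp_mins setT = [set comp_min setT t] by rewrite cards1.
apply/setP => y; rewrite inE; apply/idP/eqP => [Hy| ->]; last by apply: comp_min_in; rewrite inE.
by symmetry; apply: comp_min_eq => //; apply: connect_induced_setT.
Qed.

Lemma card_le_n_early : connected_graph e -> 0 < #|T| -> #|T| <= n_early + 1.
Proof.
move=> Gc n0; have := card_prefix_le (\max_x r x).+1.
by rewrite prefix_max n_early_in_setT card_comp_mins_setT // cardsT.
Qed.

Lemma card_eq_n_early : connected_graph e -> 0 < #|T| -> linked_nbrs_adjacent e ->
  #|T| = n_early + 1.
Proof.
move=> Gc n0 blk; have := card_prefix_eq (\max_x r x).+1 blk.
by rewrite prefix_max n_early_in_setT card_comp_mins_setT // cardsT.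
Qed.

(* With [u1], [u2] first and [v] last, both [u1 v] and [u2 v] are early edges, yet
   [u1] and [u2] lie in one component of [G - v]: adding [v] merges fewer components
   than it brings early edges. *)
Lemma card_lt_n_early v u1 u2 : connected_graph e ->
  e v u1 -> e v u2 -> u1 != u2 -> ~~ e u1 u2 -> conn [set~ v] u1 u2 ->
  (forall w, w != u1 -> r u1 < r w) -> (forall w, w != u1 -> w != u2 -> r u2 < r w) ->
  (forall w, w != v -> r w < r v) -> #|T| <= n_early.
Proof.
move=> Gc ev1 ev2 ne n12 c u1_first u2_second v_last.
have n0 : 0 < #|T| by apply/card_gt0P; exists v.
have ES : prefix (r v) = [set~ v].
  apply/setP => x; rewrite !inE; case: (eqVneq x v) => [->|xv]; first by rewrite ltnn.
  exact: v_last.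
have ET : v |: prefix (r v) = setT by apply/setP => x; rewrite ES !inE orbN.
have early_v u : e v u -> (forall w, e u w -> r u < r w) -> u \in early_nbrs (prefix (r v)) v.
  move=> evu u_first; rewrite inE ES !inE e_sym evu /=.
  apply/andP; split; first by apply: contraTneq evu => ->; rewrite e_irr.
  apply/forall_inP => w; rewrite in_common_nbhd2 => /andP [euw _].
  by apply/existsP; exists u; rewrite !inE eqxx u_first.
have M1 : u1 \in early_nbrs (prefix (r v)) v.
  apply: early_v => // w e1w; apply: u1_first.
  by apply: contraTneq e1w => ->; rewrite e_irr.
have M2 : u2 \in early_nbrs (prefix (r v)) v.
  apply: early_v => // w e2w; apply: u2_second.
    by apply: contraNneq n12 => <-; rewrite e_sym.
  by apply: contraTneq e2w => ->; rewrite e_irr.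
have c' : conn (prefix (r v)) u1 u2 by rewrite ES.
have := card_touched_lt M1 M2 ne c'.
have := card_comp_minsU1 (notin_prefix v); have := n_early_inU1 v.
have := card_prefix_le (r v).
rewrite ET n_early_in_setT card_comp_mins_setT // -cardsT -ET cardsU1 notin_prefix add1n.
lia.
Qed.

End Ordering.

Lemma exists_perm3 (T : finType) (x0 x1 x2 y0 y1 y2 : T) :
  x0 != x1 -> x0 != x2 -> x1 != x2 -> y0 != y1 -> y0 != y2 -> y1 != y2 ->
  exists s : {perm T}, [/\ s x0 = y0, s x1 = y1 & s x2 = y2].
Proof.
move=> h01 h02 h12 g01 g02 g12.
set t1 := tperm x0 y0; set a1 := t1 x1; set a2 := t1 x2.
set t2 := tperm a1 y1; set b2 := t2 a2; set t3 := tperm b2 y2.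
exists (t1 * t2 * t3)%g; rewrite !permM.
have ia1 : a1 != y0 by rewrite /a1 -(tpermL x0 y0) -/t1 (inj_eq perm_inj) eq_sym.
have t2y0 : t2 y0 = y0 by rewrite /t2 tpermD // eq_sym.
have ib0 : b2 != y0.
  by rewrite /b2 -t2y0 (inj_eq perm_inj) /a2 -(tpermL x0 y0) -/t1 (inj_eq perm_inj) eq_sym.
have ib1 : b2 != y1.
  by rewrite /b2 -(tpermL a1 y1) -/t2 (inj_eq perm_inj) /a2 /a1 (inj_eq perm_inj) eq_sym.
split.
- by rewrite /t1 tpermL -/t1 t2y0 /t3 tpermD // eq_sym.
- by rewrite -/a1 /t2 tpermL -/t2 /t3 tpermD // eq_sym.
- by rewrite -/a2 -/b2 /t3 tpermL.
Qed.

Section Averaging.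
Variable T : finType.
Implicit Types (A : {set T}) (s : {perm T}).

Definition rk s (x : T) : nat := enum_rank (s x).

Lemma rk_inj s : injective (rk s).
Proof. by move=> x y /ord_inj /enum_rank_inj /perm_inj. Qed.

Lemma rk_lt s x : rk s x < #|T|.
Proof. exact: ltn_ord. Qed.

Definition first_perms A x :=
  [set s : {perm T} | [forall y in A, (y != x) ==> (rk s x < rk s y)]].

Lemma first_perms_uniq A s x y : x \in A -> y \in A ->
  s \in first_perms A x -> s \in first_perms A y -> x = y.
Proof.
move=> xA yA; rewrite !inE => /forall_inP /(_ y yA) H1 /forall_inP /(_ x xA) H2.
apply/eqP; apply: contraT => ne.
have := ltn_trans (implyP H1 _) (implyP H2 ne); rewrite ltnn; apply.
by rewrite eq_sym.
Qed.

Lemma first_perms_exists A s x0 : x0 \in A -> exists2 x, x \in A & s \in first_perms A x.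
Proof.
move=> x0A; case: (arg_minnP (rk s) x0A) => x xA H.
exists x => //; rewrite inE; apply/forall_inP => y yA; apply/implyP => yx.
by rewrite ltn_neqAle H // andbT (inj_eq (@rk_inj s)) eq_sym.
Qed.

(* Composing with the transposition of [x] and [y] exchanges the two events. *)
Lemma card_first_perms_le A x y : x \in A -> y \in A ->
  #|first_perms A x| <= #|first_perms A y|.
Proof.
move=> xA yA; set t := tperm x y.
rewrite -(card_imset (first_perms A x) (mulgI t)); apply: subset_leq_card.
apply/subsetP => s' /imsetP [s sP ->].
rewrite inE; apply/forall_inP => w wA; apply/implyP => wy.
rewrite /rk !permM /t tpermR -/t.
move: sP; rewrite inE => /forall_inP /(_ (t w)) H; apply: (implyP (H _)).
  by rewrite /t; case: tpermP => // ->.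
by apply: contra wy => /eqP Hw; rewrite -(tpermK x y w) -/t Hw tpermL.
Qed.

Lemma card_first_perms A x : x \in A -> #|A| * #|first_perms A x| = #|{perm T}|.
Proof.
move=> xA; rewrite -sum_nat_const.
rewrite (eq_bigr (fun y => \sum_(s in first_perms A y) 1)); last first.
  move=> y yA; rewrite sum1_card; apply/eqP.
  by rewrite eqn_leq !card_first_perms_le.
rewrite (exchange_big_dep predT) //= -sum1_card; apply: eq_bigr => s _.
have [y yA sy] := first_perms_exists s xA.
rewrite (big_pred1 y) // => y' /=; apply/andP/eqP => [[y'A sy'] | ->] //.
exact: first_perms_uniq sy' sy.
Qed.

Variables (e : rel T) (e_irr : irreflexive e).

Definition early_perms f := [set s : {perm T} | early_edge e (rk s) f].

(* An edge is early exactly when one of its two endpoints comes first among the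
   endpoints and the common neighbours. *)
Lemma card_early_perms u v : e u v ->
  #|early_perms [set u; v]| * (#|common_nbhd e [set u; v]| + 2) = 2 * #|{perm T}|.
Proof.
move=> euv; set f := [set u; v]; set C := common_nbhd e f; set A := f :|: C.
have uv : u != v by apply: contraTneq euv => ->; rewrite e_irr.
have fC x : x \in f -> x \notin C.
  by rewrite /C in_common_nbhd2 => /set2P [] ->; rewrite e_irr ?andbF.
have cardA : #|A| = #|C| + 2.
  rewrite cardsU; have -> : f :&: C = set0.
    by apply/setP => x; rewrite in_setI in_set0; case: (boolP (x \in f)) => // /fC /negbTE ->.
  by rewrite cards0 subn0 /f cards2 uv addnC.
have uA : u \in A by rewrite !inE eqxx.
have vA : v \in A by rewrite !inE eqxx orbT.
have -> : early_perms f = first_perms A u :|: first_perms A v.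
  apply/setP => s; rewrite [in LHS]inE; apply/idP/idP.
  - move=> g; case: (first_perms_exists s uA) => m mA sP.
    case/setUP: (mA) => [mf | mC].
      by apply/setUP; case/set2P: mf => <-; [left | right].
    move/forall_inP: g => /(_ m mC) /exists_inP [x xf lt].
    move: sP; rewrite inE => /forall_inP /(_ x (subsetP (subsetUl _ _) x xf)) /implyP Hx.
    have xm : x != m by apply: contraTneq mC => <-; exact: fC.
    by have := Hx xm; rewrite ltnNge (ltnW lt).
  - have first_early x : x \in f -> s \in first_perms A x -> early_edge e (rk s) f.
      move=> xf; rewrite inE => /forall_inP H; apply/forall_inP => w wC.
      apply/exists_inP; exists x => //; apply: (implyP (H w _)); first by rewrite inE wC orbT.
      by apply: contraTneq wC => ->; exact: fC.
    have [uf vf] : u \in f /\ v \in f by rewrite /f set21 set22.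
    by case/setUP; [exact: first_early uf | exact: first_early vf].
rewrite cardsU.
have -> : first_perms A u :&: first_perms A v = set0.
  apply/setP => s; rewrite inE [RHS]inE; apply/negP => /andP [h1 h2].
  by move: (first_perms_uniq uA vA h1 h2) => E; rewrite E eqxx in uv.
have := card_first_perms uA; have := card_first_perms vA.
rewrite cards0 subn0 -cardA; nia.
Qed.

Lemma sum_card_early_perms :
  \sum_(f in edges e) #|early_perms f| = \sum_(s : {perm T}) n_early e (rk s).
Proof.
rewrite (eq_bigr (fun f => \sum_(s | early_edge e (rk s) f) 1)); last first.
  by move=> f _; rewrite sum1dep_card.
rewrite (exchange_big_dep predT) //=; apply: eq_bigr => s _.
by rewrite sum1dep_card.
Qed.

Lemma exists_perm_ranks (u1 u2 v : T) : u1 != u2 -> u1 != v -> u2 != v ->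
  exists s : {perm T}, [/\ rk s u1 = 0, rk s u2 = 1 & rk s v = #|T|.-1].
Proof.
move=> n12 n1v n2v.
have n3 : 2 < #|T|.
  have <- : #|[set u1; u2; v]| = 3.
    by rewrite -setUA cardsU1 cards2 !inE negb_or n12 n1v n2v.
  exact: max_card.
have i0 : 0 < #|T| by lia.
have i1 : 1 < #|T| by lia.
have i2 : #|T|.-1 < #|T| by lia.
pose y k (hk : k < #|T|) := @enum_val T T (Ordinal hk).
have y_neq k l (hk : k < #|T|) (hl : l < #|T|) : k != l -> y k hk != y l hl.
  by move=> kl; rewrite (inj_eq enum_val_inj).
have [s [s0 s1 s2]] : exists s : {perm T}, [/\ s u1 = y 0 i0, s u2 = y 1 i1 & s v = y _ i2].
  by apply: exists_perm3; rewrite // y_neq //; lia.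
by exists s; rewrite /rk s0 s1 s2 /y !enum_valK.
Qed.

End Averaging.

Section Blocks.
Variables (T : finType) (e : rel T).
Hypotheses (e_sym : symmetric e) (e_irr : irreflexive e).
Local Notation conn A := (connect (induced_rel e A)).
Implicit Types (A B : {set T}).

Lemma induced_path_adjacent A : linked_nbrs_adjacent e ->
  {in A, forall v, conn_set e (A :\ v)} ->
  forall n x p, size p <= n -> path (induced_rel e A) x p -> x != last x p -> e x (last x p).
Proof.
move=> blk HA; elim=> [|n IH] x [|a p] //=; try by rewrite eqxx.
move=> hs /andP [hxa hp]; case: p hs hp => [|b q] hs hp /=.
  by move=> _; case/and3P: hxa.
case/andP: hp => hab hq ne.
case/and3P: hxa => exa xA aA; case/and3P: hab => eab _ bA.
case: (eqVneq b x) => [bx | bx].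
  by rewrite bx in hq ne *; apply: IH => //; rewrite /= in hs; lia.
suff exb : e x b.
  apply: (IH x (b :: q)) => //; apply/andP; split => //.
  by rewrite /induced_rel /= exb xA bA.
(* [x] and [b] are neighbours of [a] joined in [A :\ a], hence adjacent *)
apply: (blk a); [by rewrite e_sym | by [] | by rewrite eq_sym | ].
have xa : x != a by apply: contraTneq exa => ->; rewrite e_irr.
have ba : b != a by apply: contraTneq eab => ->; rewrite e_irr.
have /forall_inP /(_ x) := HA a aA; rewrite !inE xa xA => /(_ isT).
move=> /forall_inP /(_ b); rewrite !inE ba bA => /(_ isT).
by apply: connect_induced_sub; apply/subsetP => w; rewrite !inE => /andP [].
Qed.

Lemma block_clique_of_linked : linked_nbrs_adjacent e -> forall A, block e A -> clique e A.
Proof.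
move=> blk A /maxsetP [/and3P [_ cA /forall_inP HA] _].
apply/forall_inP => x xA; apply/forall_inP => y yA; apply/implyP.
move/forall_inP: cA => /(_ x xA) /forall_inP /(_ y yA) /connectP [p hp ->].
exact: induced_path_adjacent blk HA (size p) x p (leqnn _) hp.
Qed.

Lemma connect_induced_path B x q : path e x q -> {subset x :: q <= B} ->
  forall y, y \in x :: q -> conn B x y.
Proof.
elim: q x => [|a q IH] x /=.
  by move=> _ _ y; rewrite inE => /eqP ->.
case/andP=> exa hq sub y; rewrite inE => /orP [/eqP -> //|yin].
apply: connect_trans (IH a hq _ y yin).
  by apply: connect_induced_edge => //; apply: sub; rewrite !inE eqxx ?orbT.
by move=> w win; apply: sub; rewrite inE win orbT.
Qed.

Lemma induced_path_sub B x p : path (induced_rel e B) x p -> {subset p <= B}.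
Proof.
elim: p x => [|a p IH] x //= /andP [/and3P [_ _ aB] hp] w.
by rewrite inE => /orP [/eqP ->|]; [| apply: IH hp w].
Qed.

Lemma conn_set_path a q : path e a q -> conn_set e [set x in a :: q].
Proof.
move=> hq.
have sub : {subset a :: q <= [set x in a :: q]} by move=> w win; rewrite inE.
apply/forall_inP => x; rewrite inE => xin; apply/forall_inP => y; rewrite inE => yin.
apply: connect_trans (_ : conn [set x in a :: q] x a) (connect_induced_path hq sub yin).
by rewrite (connect_induced_sym e_sym); exact: (connect_induced_path hq sub xin).
Qed.

Lemma conn_set_cycle c : path.cycle e c -> conn_set e [set x in c].
Proof.
case: c => [|a q] cyc; first by apply/forall_inP => x; rewrite inE.
by move: cyc; rewrite /= rcons_path => /andP [hq _]; apply: conn_set_path.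
Qed.

Lemma conn_set_cycleD1 c w : uniq c -> path.cycle e c -> w \in c ->
  conn_set e ([set x in c] :\ w).
Proof.
move=> un cyc wc; case: (rot_to wc) => i q Hr.
have cyc' : path.cycle e (w :: q) by rewrite -Hr rot_cycle.
have un' : uniq (w :: q) by rewrite -Hr rot_uniq.
have -> : [set x in c] :\ w = [set x in q].
  apply/setP => y; rewrite !inE -(mem_rot i c) Hr inE.
  by case: (eqVneq y w) => //= ->; move: un' => /= /andP [/negbTE ->].
case: q cyc' {un' Hr} => [|a q] cyc'; first by apply/forall_inP => x; rewrite inE.
by apply: conn_set_path; move: cyc'; rewrite /= rcons_path => /andP [_ /andP [hq _]].
Qed.

(* A simple path between two neighbours of [v] avoiding [v] closes a cycle through [v];
   the block containing that cycle is a clique. *)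
Lemma linked_of_block_clique : (forall A, block e A -> clique e A) -> linked_nbrs_adjacent e.
Proof.
move=> H v u1 u2 ev1 ev2 ne /connectP [p0 hp0 l0]; subst u2.
case: (shortenP hp0) ev2 ne => p hp up _ ev2 ne.
have u1v : u1 != v by apply: contraTneq ev1 => ->; rewrite e_irr.
have vnot : v \notin u1 :: p.
  rewrite inE negb_or eq_sym u1v /=; apply/negP => /(induced_path_sub hp).
  by rewrite !inE eqxx.
have hpe : path e u1 p by apply: sub_path hp => a b /and3P [].
set c := v :: u1 :: p.
have unc : uniq c by rewrite /c cons_uniq vnot up.
have cyc : path.cycle e c by rewrite /c /= ev1 rcons_path hpe e_sym ev2.
have bic : biconnected_set e [set x in c].
  apply/and3P; split.
  - by apply/set0Pn; exists v; rewrite !inE eqxx.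
  - exact: conn_set_cycle cyc.
  - by apply/forall_inP => w; rewrite inE; apply: conn_set_cycleD1.
case: (maxset_exists bic) => B /H /forall_inP cB /subsetP sAB.
have u1B : u1 \in B by apply: sAB; rewrite !inE eqxx orbT.
have lB : last u1 p \in B by apply: sAB; rewrite inE /c inE mem_last orbT.
by move: (cB u1 u1B) => /forall_inP /(_ _ lB) /implyP; apply.
Qed.

Lemma linked_nbrs_adjacentP :
  linked_nbrs_adjacent e <-> (forall A, block e A -> clique e A).
Proof. by split; [exact: block_clique_of_linked | exact: linked_of_block_clique]. Qed.

End Blocks.

Section PermutationCounts.
Variables (T : finType) (e : rel T).
Hypotheses (e_sym : symmetric e) (e_irr : irreflexive e).
Hypotheses (G_conn : connected_graph e) (T_nonempty : 0 < #|T|).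

Lemma n_early_ge (s : {perm T}) : #|T|.-1 <= n_early e (rk s).
Proof. by have := card_le_n_early e_sym e_irr (@rk_inj _ s) G_conn T_nonempty; lia. Qed.

Lemma n_early_eq_iff :
  (forall s : {perm T}, n_early e (rk s) = #|T|.-1) <-> linked_nbrs_adjacent e.
Proof.
split => [all_min v u1 u2 ev1 ev2 ne c | blk s]; last first.
  by have := card_eq_n_early e_sym e_irr (@rk_inj _ s) G_conn T_nonempty blk; lia.
apply/negPn/negP => n12.
have v1 : u1 != v by apply: contraTneq ev1 => ->; rewrite e_irr.
have v2 : u2 != v by apply: contraTneq ev2 => ->; rewrite e_irr.
have [s [r1 r2 rv]] := exists_perm_ranks ne v1 v2.
have rk_neq x y : x != y -> rk s x != rk s y by rewrite (inj_eq (@rk_inj _ s)).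
suff : #|T| <= n_early e (rk s) by rewrite all_min; lia.
apply: (card_lt_n_early e_sym e_irr (@rk_inj _ s) G_conn ev1 ev2 ne n12 c).
- by move=> w /rk_neq; rewrite r1; lia.
- by move=> w /rk_neq w1 /rk_neq w2; move: w1 w2; rewrite r1 r2; lia.
- by move=> w /rk_neq; have := rk_lt s w; rewrite rv; lia.
Qed.

End PermutationCounts.

Import Order.TTheory GRing.Theory Num.Theory.
Local Open Scope ring_scope.

Lemma sum_inv_common_nbhd (T : finType) (e : rel T) (e_irr : irreflexive e)
    (R : numFieldType) :
  \sum_(f in edges e) 1 / ((#|common_nbhd e f|)%:R + 2) =
  (\sum_(s : {perm T}) n_early e (rk s))%:R / (2 * #|{perm T}|)%:R :> R.
Proof.
have N0 : (0 < #|{perm T}|)%N by apply/card_gt0P; exists 1%g.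
rewrite -sum_card_early_perms natr_sum mulr_suml; apply: eq_bigr => f /edgesP [u [v [euv ->]]].
have cardE := card_early_perms e_irr euv.
have E0 : #|early_perms e [set u; v]|%:R != 0 :> R.
  by rewrite pnatr_eq0; apply: contraTneq N0 => E0; move: cardE; rewrite E0 /=; lia.
rewrite -cardE natrM natrD; field.
by rewrite E0 /= -(natrD _ _ 2) pnatr_eq0 addn2.
Qed.

Theorem theorem1 (T : finType) (e : rel T)
  (e_sym : symmetric e) (e_irr : irreflexive e)
  (T_nonempty : (0 < #|T|)%N) (G_conn : connected_graph e) :
  ((#|T|.-1)%:R / 2 : rat) <= \sum_(f in edges e) 1 / ((#|common_nbhd e f|)%:R + 2)
  /\
  (\sum_(f in edges e) 1 / ((#|common_nbhd e f|)%:R + 2) = ((#|T|.-1)%:R / 2 : rat)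
   <-> (forall A : {set T}, block e A -> clique e A)).
Proof.
set n := #|T|; set N := #|{perm T}|; set X := (\sum_(s : {perm T}) n_early e (rk s))%N.
have N0 : (0 < N)%N by apply/card_gt0P; exists 1%g.
have lbX : (N * n.-1 <= X ?= iff [forall s, n.-1 == n_early e (rk s)])%N.
  rewrite -[(N * _)%N]sum_nat_const; apply: leqif_sum => s _; apply: leqif_eq.
  exact: n_early_ge.
have D0 : (2 * N)%:R^-1 != 0 :> rat by rewrite invr_eq0 pnatr_eq0 muln_eq0 -lt0n N0.
have -> : (n.-1)%:R / 2 = (N * n.-1)%:R / (2 * N)%:R :> rat.
  by rewrite !natrM; field; rewrite pnatr_eq0 -lt0n N0.
rewrite sum_inv_common_nbhd // -/X ler_pM2r ?invr_gt0 ?ltr0n ?muln_gt0 ?N0 //.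
rewrite ler_nat lbX; split => //.
apply: iff_trans (linked_nbrs_adjacentP e_sym e_irr).
apply: iff_trans (n_early_eq_iff e_sym e_irr G_conn T_nonempty).
split => [/(mulIf D0)/eqP | all_min].
  by rewrite eqr_nat eq_sym lbX => /forallP all_min s; apply/esym/eqP/all_min.
by congr (_%:R / _); apply/esym/eqP; rewrite lbX; apply/forallP => s; rewrite all_min.
Qed.
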